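(* Let $\Gamma$ be a subalgebra of the $\Bbbk$-algebra $A$ and let $\sim$ be the equivalence relation on $\mathrm{cfs}(\Gamma)$ generated by $\mathfrak m\sim\mathfrak n$ whenever $\mathrm{Ext}^1_\Gamma(S_{\mathfrak m},S_{\mathfrak n})\ne0$. If $\Gamma$ is quasinoetherian with respect to $\sim$ and $\Gamma$ is quasicentral in $A$, then $\Gamma$ is a Harish-Chandra block subalgebra of $A$ with respect to $\sim$.
   Context: $\mathrm{cfs}(\Gamma)$: maximal two-sided ideals $\mathfrak m$ of $\Gamma$ with $\dim\Gamma/\mathfrak m<\infty$; $S_{\mathfrak m}$ the unique simple $\Gamma/\mathfrak m$-module. For a class $B$, $\mathcal W(B)=\{\mathfrak m_1\cdots\mathfrak m_k:k\ge0,\mathfrak m_i\in B\}$; for a $\Gamma$-module $V$, $V(B)=\{v:\mathfrak mv=0$ for some $\mathfrak m\in\mathcal W(B)\}$; $V$ is a block module if $V=\bigoplus_BV(B)$. $\Gamma$ is quasinoetherian w.r.t. $\sim$ if $\Gamma/\mathfrak m$ is finite-dimensional for every class $B$ and $\mathfrak m\in\mathcal W(B)$. $\Gamma$ is quasicentral in $A$ if $\Gamma a\Gamma$ is finitely generated as a left and as a right $\Gamma$-module for every $a\in A$. $\Gamma$ is a Harish-Chandra block subalgebra of $A$ w.r.t. $\sim$ if $A/A\mathfrak m$ is a block module over $\Gamma$ for every $B$ and $\mathfrak m\in\mathcal W(B)$. *)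

From HB Require Import structures.
From mathcomp Require Import all_boot all_algebra.
From mathcomp Require Import boolp classical_sets.
From Stdlib Require Import Relations.
Set Implicit Arguments. Unset Strict Implicit. Unset Printing Implicit Defensive.
Import GRing.Theory.
Local Open Scope ring_scope.
Local Open Scope classical_set_scope.

Section Defs.
Variables (k : fieldType) (G : algType k).

Definition two_sided_ideal (I : set G) : Prop :=
  I 0 /\ (forall x y, I x -> I y -> I (x + y)) /\ (forall x, I x -> I (- x)) /\
  (forall g x, I x -> I (g * x)) /\ (forall g x, I x -> I (x * g)).

Definition fin_codim (I : set G) : Prop :=
  exists n (e : 'I_n -> G), forall x, exists c : 'I_n -> k,
    I (x - \sum_(i < n) c i *: e i).

Definition maximal_ideal (I : set G) : Prop :=
  two_sided_ideal I /\ I <> setT /\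
  forall J, two_sided_ideal J -> I `<=` J -> J = I \/ J = setT.

Definition cfs : set (set G) := [set m | maximal_ideal m /\ fin_codim m].

Definition ideal_mul (I J : set G) : set G :=
  [set z | exists n (x y : 'I_n -> G),
     (forall i, I (x i) /\ J (y i)) /\ z = \sum_(i < n) x i * y i].

Definition ideal_prod (s : seq (set G)) : set G := foldr ideal_mul setT s.

Fixpoint all_in (B : set (set G)) (s : seq (set G)) : Prop :=
  match s with [::] => True | J0 :: s' => B J0 /\ all_in B s' end.

Definition W (B : set (set G)) : set (set G) :=
  [set m | exists s, all_in B s /\ m = ideal_prod s].

Record gmod := GMod {
  gcar :> lmodType k;
  gact : G -> gcar -> gcar;
  gact_addl : forall x y v, gact (x + y) v = gact x v + gact y v;
  gact_addr : forall x v w, gact x (v + w) = gact x v + gact x w;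
  gact_scalel : forall (c : k) x v, gact (c *: x) v = c *: gact x v;
  gact_scaler : forall (c : k) x v, gact x (c *: v) = c *: gact x v;
  gact1 : forall v, gact 1 v = v;
  gactM : forall x y v, gact (x * y) v = gact x (gact y v)
}.

Definition submodule (M : gmod) (N : set M) : Prop :=
  N 0 /\ (forall v w, N v -> N w -> N (v + w)) /\
  (forall (c : k) v, N v -> N (c *: v)) /\
  (forall x v, N v -> N (gact x v)).

Definition simple_module (M : gmod) : Prop :=
  (exists v : M, v <> 0) /\
  forall N : set M, @submodule M N -> N = [set 0] \/ N = setT.

Definition annihilates (I : set G) (M : gmod) : Prop :=
  forall x (v : M), I x -> gact x v = 0.

Definition ghom (M N : gmod) (h : M -> N) : Prop :=
  (forall v w, h (v + w) = h v + h w) /\ (forall (c : k) v, h (c *: v) = c *: h v) /\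
  (forall x v, h (gact x v) = gact x (h v)).

(* Ext^1_G(S, T) <> 0 : there is a non-split short exact sequence
   0 -> T -> E -> S -> 0 of G-modules (Yoneda description of Ext^1). *)
Definition Ext1_nonzero (S T : gmod) : Prop :=
  exists (E : gmod) (i : T -> E) (p : E -> S),
    ghom i /\ ghom p /\ injective i /\ (forall s, exists e, p e = s) /\
    (forall e, p e = 0 <-> exists t, i t = e) /\
    ~ (exists s : S -> E, ghom s /\ forall v, p (s v) = v).

(* S is (a copy of) the unique simple G/m-module S_m *)
Definition is_S (m : set G) (S : gmod) : Prop := simple_module S /\ annihilates m S.

Definition ext_rel (m n : set G) : Prop :=
  cfs m /\ cfs n /\ exists S T : gmod, is_S m S /\ is_S n T /\ Ext1_nonzero S T.

Definition ext_sim : relation (set G) := clos_refl_sym_trans _ ext_rel.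

Definition ext_class (B : set (set G)) : Prop :=
  exists m, cfs m /\ B = [set n | cfs n /\ ext_sim m n].

Definition quasinoetherian : Prop :=
  forall B m, ext_class B -> W B m -> fin_codim m.

End Defs.

Section Sub.
Variables (k : fieldType) (G A : algType k) (f : {lrmorphism G -> A}).

Definition GaG (a : A) : set A :=
  [set z | exists n (g h : 'I_n -> G), z = \sum_(i < n) f (g i) * a * f (h i)].

Definition fg_left (X : set A) : Prop :=
  exists n (e : 'I_n -> A), (forall i, X (e i)) /\
    forall z, X z -> exists c : 'I_n -> G, z = \sum_(i < n) f (c i) * e i.

Definition fg_right (X : set A) : Prop :=
  exists n (e : 'I_n -> A), (forall i, X (e i)) /\
    forall z, X z -> exists c : 'I_n -> G, z = \sum_(i < n) e i * f (c i).

Definition quasicentral : Prop := forall a, fg_left (GaG a) /\ fg_right (GaG a).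

Definition Aideal (m : set G) : set A :=
  [set z | exists n (a : 'I_n -> A) (x : 'I_n -> G),
     (forall i, m (x i)) /\ z = \sum_(i < n) a i * f (x i)].

(* For the G-module A/N (G acting by left multiplication through f):
   the component (A/N)(B) = { v | m' v = 0 in A/N for some m' in W(B) } *)
Definition quot_part (N : set A) (B : set (set G)) : set A :=
  [set v | exists m', W B m' /\ forall x, m' x -> N (f x * v)].

(* A/N = \bigoplus_B (A/N)(B), written out on representatives modulo N *)
Definition block_quot (N : set A) : Prop :=
  (forall v, exists n (Bs : 'I_n -> set (set G)) (vs : 'I_n -> A),
      (forall i, ext_class (Bs i) /\ quot_part N (Bs i) (vs i)) /\
      N (v - \sum_(i < n) vs i)) /\
  (forall n (Bs : 'I_n -> set (set G)) (vs : 'I_n -> A),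
      (forall i, ext_class (Bs i) /\ quot_part N (Bs i) (vs i)) ->
      (forall i j, i != j -> Bs i <> Bs j) ->
      N (\sum_(i < n) vs i) -> forall i, N (vs i)).

Definition HC_block_subalgebra : Prop :=
  forall B m, ext_class B -> W B m -> block_quot (Aideal m).

End Sub.

From HB Require Import structures.
From mathcomp Require Import all_boot all_algebra.
From mathcomp Require Import boolp classical_sets.
From Stdlib Require Import Relations Lia.
From mathcomp Require Import zify.
Set Implicit Arguments. Unset Strict Implicit. Unset Printing Implicit Defensive.
Import GRing.Theory.
Local Open Scope ring_scope.

(* Fix a class [B], [m] in [W(B)] and [a] in [A]. As [G/m] is finite-dimensional and [G a G] is
   a finitely generated right [G]-module, the [G]-submodule of [A/Am] generated by [a] is
   finite-dimensional, so everything happens in a finite-dimensional representation of [G].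
   There, the annihilator of a simple subquotient is a maximal ideal of finite codimension, and
   induction along a composition series splits the module into its block components: a simple
   subquotient whose annihilator lies outside a class [B'] splits off from every extension by
   a [B']-block, since a non-split extension would put both annihilators in the same class.
   The sum of the components is direct because products of maximal ideals taken from
   different classes are comaximal, which gives Chinese-remainder idempotents. *)

Lemma ex_minn_prop (P : nat -> Prop) :
  (exists n, P n) -> exists2 n, P n & forall m, P m -> (n <= m)%N.
Proof.
move=> [n Pn]; have exP : exists n, `[< P n >] by exists n; apply/asboolP.
by case: (ex_minnP exP) => m /asboolP Pm min_m; exists m => // j /asboolP /min_m.
Qed.

Definition ord_cat (T : Type) n1 n2 (a1 : 'I_n1 -> T) (a2 : 'I_n2 -> T)
    (i : 'I_(n1 + n2)) : T :=
  match split i with inl j => a1 j | inr j => a2 j end.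

Section OrdCat.
Variables (T : Type) (n1 n2 : nat) (a1 : 'I_n1 -> T) (a2 : 'I_n2 -> T).

Lemma ord_catP (P : T -> Prop) :
  (forall i, P (a1 i)) -> (forall i, P (a2 i)) -> forall i, P (ord_cat a1 a2 i).
Proof. by move=> P1 P2 i; rewrite /ord_cat; case: (split i). Qed.

Lemma big_ord_cat (V : nmodType) (F : T -> V) :
  \sum_(i < n1 + n2) F (ord_cat a1 a2 i) = \sum_(i < n1) F (a1 i) + \sum_(i < n2) F (a2 i).
Proof.
rewrite big_split_ord /ord_cat; congr (_ + _); apply: eq_bigr => i _.
  by rewrite (unsplitK (inl _ i)).
by rewrite (unsplitK (inr _ i)).
Qed.

End OrdCat.

Section RowSubspace.
Variables (k : fieldType) (d : nat).

Definition subspace (P : 'rV[k]_d -> Prop) :=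
  [/\ P 0, forall v w, P v -> P w -> P (v + w) & forall c v, P v -> P (c *: v)].

Lemma subspace_submx P : subspace P -> exists U : 'M[k]_d, forall v, P v <-> (v <= U)%MS.
Proof.
case=> P0 PD PZ.
have Pcomb m (U : 'M_(m, d)) w : (forall i, P (row i U)) -> P (w *m U).
  by move=> PU; rewrite mulmx_sum_row; apply: (big_ind P) => // i _; apply: PZ.
pose Q n := exists m (U : 'M[k]_(m, d)), (forall i, P (row i U)) /\ (d - \rank U)%N = n.
have [_ [m [U [PU <-]]] Umin] : exists2 n, Q n & forall n', Q n' -> (n <= n')%N.
  by apply: ex_minn_prop; exists d, 0%N, 0; split=> [[]//|]; rewrite mxrank0 subn0.
exists <<U>>%MS => v; rewrite genmxE; split=> [Pv|/submxP[w ->]]; last exact: Pcomb.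
apply/negPn/negP => nvU.
have /Umin : Q (d - \rank (U + v)%MS)%N.
  exists (m + 1)%N, (col_mx U v); split; last by rewrite addsmxE.
  by move=> i; rewrite -(splitK i); case: (split i) => j; rewrite ?rowKu ?rowKd ?row_id.
have := mxrank_leqif_sup (addsmxSl U v); rewrite addsmx_sub submx_refl (negbTE nvU).
by move=> /ltn_leqif; have := rank_leq_col (U + v)%MS; lia.
Qed.

End RowSubspace.

Section TwoSidedIdeals.
Variables (k : fieldType) (G : algType k).
Implicit Types (I J : set G) (s : seq (set G)).

Lemma ideal0 I : two_sided_ideal I -> I 0.
Proof. by case. Qed.
Lemma idealD I x y : two_sided_ideal I -> I x -> I y -> I (x + y).
Proof. by case=> _ [h _]; apply: h. Qed.
Lemma idealN I x : two_sided_ideal I -> I x -> I (- x).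
Proof. by case=> _ [_ [h _]]; apply: h. Qed.
Lemma idealMl I g x : two_sided_ideal I -> I x -> I (g * x).
Proof. by case=> _ [_ [_ [h _]]]; apply: h. Qed.
Lemma idealMr I g x : two_sided_ideal I -> I x -> I (x * g).
Proof. by case=> _ [_ [_ [_ h]]]; apply: h. Qed.
Lemma idealB I x y : two_sided_ideal I -> I x -> I y -> I (x - y).
Proof. by move=> tI Ix Iy; apply: idealD => //; apply: idealN. Qed.
Lemma idealZ I (c : k) x : two_sided_ideal I -> I x -> I (c *: x).
Proof. by move=> tI Ix; rewrite -[x]mul1r scalerAl; apply: idealMl. Qed.
Lemma ideal1 I : two_sided_ideal I -> I 1 -> I = setT.
Proof. by move=> tI I1; apply/seteqP; split=> // x _; rewrite -[x]mulr1; apply: idealMl. Qed.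

Lemma all_in_impl (B B' : set (set G)) s :
  (forall J, B J -> B' J) -> all_in B s -> all_in B' s.
Proof. by move=> BB'; elim: s => //= J s IHs [BJ Bs]; split; [apply: BB' | apply: IHs]. Qed.

Lemma ideal_mulM I J x y : I x -> J y -> ideal_mul I J (x * y).
Proof. by move=> Ix Jy; exists 1%N, (fun=> x), (fun=> y); rewrite big_ord1. Qed.

Lemma ideal_mul_ideal I J :
  two_sided_ideal I -> two_sided_ideal J -> two_sided_ideal (ideal_mul I J).
Proof.
move=> tI tJ; split; first by exists 0%N, (fun=> 0), (fun=> 0); rewrite big_ord0; split=> [[]|].
split=> [_ _ [n1 [x1 [y1 [IJ1 ->]]]] [n2 [x2 [y2 [IJ2 ->]]]]|].
  pose xy := ord_cat (fun i => (x1 i, y1 i)) (fun i => (x2 i, y2 i)).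
  exists (n1 + n2)%N, (fun i => (xy i).1), (fun i => (xy i).2).
  rewrite /xy (big_ord_cat _ _ (fun p : G * G => p.1 * p.2)); split=> //.
  exact: (ord_catP (P := fun p => I p.1 /\ J p.2)).
split=> [_ [n [x [y [IJ ->]]]]|].
  exists n, (fun i => - x i), y; rewrite -sumrN; split=> [i|]; last first.
    by apply: eq_bigr => i _; rewrite mulNr.
  by case: (IJ i) => Ix Jy; split=> //; apply: idealN.
split=> [g _ [n [x [y [IJ ->]]]]|g _ [n [x [y [IJ ->]]]]].
  exists n, (fun i => g * x i), y; rewrite mulr_sumr; split=> [i|]; last first.
    by apply: eq_bigr => i _; rewrite mulrA.
  by case: (IJ i) => Ix Jy; split=> //; apply: idealMl.
exists n, x, (fun i => y i * g); rewrite mulr_suml; split=> [i|]; last first.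
  by apply: eq_bigr => i _; rewrite mulrA.
by case: (IJ i) => Ix Jy; split=> //; apply: idealMr.
Qed.

Lemma ideal_prod_ideal s : all_in (@two_sided_ideal k G) s -> two_sided_ideal (ideal_prod s).
Proof. by elim: s => //= J s IHs [tJ ts]; apply: ideal_mul_ideal => //; apply: IHs. Qed.

Definition ideal_add I J : set G := [set z | exists x y, [/\ I x, J y & z = x + y]].

Lemma ideal_add_ideal I J :
  two_sided_ideal I -> two_sided_ideal J -> two_sided_ideal (ideal_add I J).
Proof.
move=> tI tJ; split; first by exists 0, 0; split; rewrite ?addr0 //; apply: ideal0.
split=> [_ _ [x [y [Ix Jy ->]]] [x' [y' [Ix' Jy' ->]]]|].
  by exists (x + x'), (y + y'); split; [apply: idealD | apply: idealD | rewrite addrACA].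
split=> [_ [x [y [Ix Jy ->]]]|].
  by exists (- x), (- y); split; rewrite ?opprD //; apply: idealN.
split=> g _ [x [y [Ix Jy ->]]].
  by exists (g * x), (g * y); split; rewrite ?mulrDr //; apply: idealMl.
by exists (x * g), (y * g); split; rewrite ?mulrDl //; apply: idealMr.
Qed.

Lemma ideal_addC I J z : ideal_add I J z -> ideal_add J I z.
Proof. by move=> [x [y [Ix Jy ->]]]; exists y, x; rewrite addrC. Qed.

Lemma ideal_addl I J : two_sided_ideal J -> (I `<=` ideal_add I J)%classic.
Proof. by move=> tJ x Ix; exists x, 0; split; rewrite ?addr0 //; apply: ideal0. Qed.

Lemma ideal_addr I J : two_sided_ideal I -> (J `<=` ideal_add I J)%classic.
Proof. by move=> tI y Jy; apply: ideal_addC; apply: ideal_addl. Qed.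

Lemma maximal_ideal_ideal I : maximal_ideal I -> two_sided_ideal I.
Proof. by case. Qed.

Lemma maximal_ideal_neqT I : maximal_ideal I -> I <> setT.
Proof. by case=> _ []. Qed.

Lemma maximal_ideal_sub_eq I J : maximal_ideal I -> maximal_ideal J -> (I `<=` J)%classic -> I = J.
Proof.
move=> [tI [_ Imax]] mJ IJ; case: (Imax J (maximal_ideal_ideal mJ) IJ) => // JT.
by case: (maximal_ideal_neqT mJ).
Qed.

Lemma maximal_ideal_comax I J : maximal_ideal I -> maximal_ideal J -> I <> J -> ideal_add I J 1.
Proof.
move=> mI mJ nIJ; have [tI [_ Imax]] := mI; have tJ := maximal_ideal_ideal mJ.
have [IJ_I|-> //] := Imax _ (ideal_add_ideal tI tJ) (ideal_addl tJ).
case: nIJ; apply/esym/maximal_ideal_sub_eq => // y Jy; rewrite -IJ_I.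
exact: ideal_addr.
Qed.

Lemma maximal_ideal_prime P I J : maximal_ideal P -> two_sided_ideal I -> two_sided_ideal J ->
  (ideal_mul I J `<=` P)%classic -> (I `<=` P)%classic \/ (J `<=` P)%classic.
Proof.
move=> mP tI tJ IJP; have [tP [_ Pmax]] := mP.
have [IP_P|IP_T] := Pmax _ (ideal_add_ideal tI tP) (ideal_addr tI).
  by left=> x Ix; rewrite -IP_P; apply: ideal_addl.
right=> y Jy; have : ideal_add I P 1 by rewrite IP_T.
move=> [a [b [Ia Pb e1]]]; rewrite -[y]mul1r e1 mulrDl.
by apply: idealD => //; [apply: IJP; apply: ideal_mulM | apply: idealMr].
Qed.

Lemma maximal_ideal_prod_sub P s : maximal_ideal P -> all_in (@two_sided_ideal k G) s ->
  (ideal_prod s `<=` P)%classic -> exists2 I, (forall B, all_in B s -> B I) & (I `<=` P)%classic.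
Proof.
move=> mP; elim: s => [_ TP|I s IHs /= [tI ts] IsP].
  by case: (maximal_ideal_neqT mP); apply/seteqP; split=> // x _; apply: TP.
have [IP|sP] := maximal_ideal_prime mP tI (ideal_prod_ideal ts) IsP.
  by exists I => // B [].
by have [J sJ JP] := IHs ts sP; exists J => // B [_ /sJ].
Qed.

Lemma comax_mul I J J' : two_sided_ideal I ->
  ideal_add I J 1 -> ideal_add I J' 1 -> ideal_add I (ideal_mul J J') 1.
Proof.
move=> tI [i [j [Ii Jj e]]] [i' [j' [Ii' Jj' e']]].
exists (i * i' + i * j' + j * i'), (j * j'); split; last 1 first.
- by rewrite -[1]mulr1 {1}e e' !mulrDl !mulrDr !addrA.
- exact: idealD tI (idealD tI (idealMr _ tI Ii) (idealMr _ tI Ii)) (idealMl _ tI Ii').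
- exact: ideal_mulM.
Qed.

Lemma comax_prod I s : two_sided_ideal I ->
  all_in (fun J => ideal_add I J 1) s -> ideal_add I (ideal_prod s) 1.
Proof.
move=> tI; elim: s => [_|J s IHs /= [IJ Is]].
  by exists 0, 1; split; rewrite ?add0r //; apply: ideal0.
exact: comax_mul (IHs Is).
Qed.

Lemma comax_unit I (T : eqType) (r : seq T) (J : T -> set G) : two_sided_ideal I ->
  (forall j, j \in r -> two_sided_ideal (J j) /\ ideal_add I (J j) 1) ->
  exists2 q, I (1 - q) & forall j, j \in r -> J j q.
Proof.
move=> tI; elim: r => [_|j r IHr comax]; first by exists 1 => //; rewrite subrr; apply: ideal0.
have [|q Iq Jq] := IHr; first by move=> j' j'r; apply: comax; rewrite in_cons j'r orbT.
have [tJ [a [b [Ia Jb e1]]]] := comax j (mem_head j r).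
exists (b * q) => [|j']; last first.
  rewrite in_cons => /orP [/eqP -> | j'r]; first exact: idealMr tJ Jb.
  by apply: idealMl (Jq j' j'r); apply: (comax j' _).1; rewrite in_cons j'r orbT.
have -> : 1 - b * q = a + b * (1 - q) by rewrite mulrBr mulr1 addrA -e1.
by apply: idealD => //; apply: idealMl.
Qed.

End TwoSidedIdeals.

Section ExtClasses.
Variables (k : fieldType) (G : algType k).
Implicit Types (B : set (set G)) (I J : set G).

Lemma ext_sim_trans I J J' : ext_sim I J -> ext_sim J J' -> ext_sim I J'.
Proof. exact: rst_trans. Qed.

Lemma ext_sim_sym I J : ext_sim I J -> ext_sim J I.
Proof. exact: rst_sym. Qed.

Definition ext_class_of I : set (set G) := [set J | cfs J /\ ext_sim I J].

Lemma ext_class_ofP I : cfs I -> ext_class (ext_class_of I) /\ ext_class_of I I.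
Proof. by move=> cI; split; [exists I | split=> //; apply: rst_refl]. Qed.

Lemma ext_class_cfs B I : ext_class B -> B I -> cfs I.
Proof. by move=> [J [_ ->]] []. Qed.

Lemma ext_class_ideals B s : ext_class B -> all_in B s -> all_in (@two_sided_ideal k G) s.
Proof. by move=> cB; apply: all_in_impl => I /(ext_class_cfs cB) [[]]. Qed.

Lemma ext_class_closed B I J : ext_class B -> B I -> cfs J -> ext_sim I J -> B J.
Proof. by move=> [m [_ ->]] [_ mI] cJ IJ; split=> //; apply: ext_sim_trans IJ. Qed.

Lemma ext_class_eq B B' I : ext_class B -> ext_class B' -> B I -> B' I -> B = B'.
Proof.
move=> [m [_ ->]] [m' [_ ->]] [_ mI] [_ m'I].
by apply/seteqP; split=> J [cJ hJ]; split=> //;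
  [apply: ext_sim_trans m'I (ext_sim_trans (ext_sim_sym mI) hJ) |
   apply: ext_sim_trans mI (ext_sim_trans (ext_sim_sym m'I) hJ)].
Qed.

Lemma ext_class_comax B B' (s s' : seq (set G)) :
  ext_class B -> ext_class B' -> B <> B' -> all_in B s -> all_in B' s' ->
  ideal_add (ideal_prod s) (ideal_prod s') 1.
Proof.
move=> cB cB' nBB' sB s'B'; apply: comax_prod; first exact/ideal_prod_ideal/(ext_class_ideals cB).
apply: all_in_impl s'B' => J' B'J'; apply: ideal_addC.
have [mJ' _] := ext_class_cfs cB' B'J'.
apply: comax_prod (maximal_ideal_ideal mJ') _; apply: all_in_impl sB => J BJ.
have [mJ _] := ext_class_cfs cB BJ; apply: maximal_ideal_comax => // eJ'J.
by apply: nBB'; apply: ext_class_eq cB cB' BJ _; rewrite -eJ'J.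
Qed.

End ExtClasses.

Section MatrixRepresentation.
Variables (k : fieldType) (G : algType k) (d : nat).

(* [v] in ['rV_d] is a left [G]-module via [x . v = v *m rho x], so [rho] reverses products. *)
Record mxrep := MxRep {
  mxrep_fun :> G -> 'M[k]_d;
  mxrep_linear : linear mxrep_fun;
  mxrep1 : mxrep_fun 1 = 1%:M;
  mxrepM : forall x y, mxrep_fun (x * y) = mxrep_fun y *m mxrep_fun x }.

HB.instance Definition _ (rho : mxrep) :=
  GRing.isLinear.Build k G 'M[k]_d *:%R rho (mxrep_linear rho).

End MatrixRepresentation.

Section StableSubspaces.
Variables (k : fieldType) (G : algType k) (d : nat) (rho : mxrep G d).
Implicit Types (L S T U X Y : 'M[k]_d) (t u v w : 'rV[k]_d) (x y : G).

Lemma mxrep_sub_compose v x y :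
  v - v *m rho (x + y - y * x) = (v - v *m rho x) - (v - v *m rho x) *m rho y.
Proof.
have -> : rho (x + y - y * x) = rho x + rho y - rho x *m rho y.
  by rewrite raddfB raddfD /= mxrepM.
by rewrite mulmxBr mulmxDr mulmxBl mulmxA !opprD !opprK !addrA.
Qed.

Definition mxstable U := forall x, (U *m rho x <= U)%MS.

Lemma mxstable_act U v x : mxstable U -> (v <= U)%MS -> (v *m rho x <= U)%MS.
Proof. by move=> sU vU; apply: submx_trans (submxMr _ vU) (sU x). Qed.

Lemma mxstable0 : mxstable 0.
Proof. by move=> x; rewrite mul0mx. Qed.

Lemma mxstable1 : mxstable 1%:M.
Proof. by move=> x; apply: submx1. Qed.

Lemma mxstable_adds U V : mxstable U -> mxstable V -> mxstable (U + V)%MS.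
Proof. by move=> sU sV x; rewrite addsmxMr addsmxS. Qed.

Lemma mxstable_cap U V : mxstable U -> mxstable V -> mxstable (U :&: V)%MS.
Proof. by move=> sU sV x; apply: submx_trans (capmxMr _ _ _) (capmxS _ _). Qed.

Lemma subspace_mxstable P : subspace P -> (forall v x, P v -> P (v *m rho x)) ->
  exists2 U, mxstable U & forall v, P v <-> (v <= U)%MS.
Proof.
move=> sP Pact; have [U PU] := subspace_submx sP; exists U => // x.
by apply/row_subP => i; rewrite row_mul; apply/PU/Pact/PU/row_sub.
Qed.

Definition simple_subquo L S :=
  [/\ mxstable L, mxstable S, (L <= S)%MS, ~~ (S <= L)%MS &
      forall U, mxstable U -> (L <= U)%MS -> (U <= S)%MS -> (U <= L)%MS \/ (S <= U)%MS].

Lemma simple_subquoP L S P : simple_subquo L S -> subspace P ->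
  (forall v x, P v -> P (v *m rho x)) ->
  (forall v, (v <= L)%MS -> P v) -> (forall v, P v -> (v <= S)%MS) ->
  (forall v, P v -> (v <= L)%MS) \/ (forall v, (v <= S)%MS -> P v).
Proof.
case=> _ _ _ _ Smin sP Pact LP PS; have [U sU PU] := subspace_mxstable sP Pact.
have LU : (L <= U)%MS by apply/rV_subP => v /LP /PU.
have US : (U <= S)%MS by apply/rV_subP => v /PU /PS.
have [UL|SU] := Smin U sU LU US; [left=> v /PU vU | right=> v vS; apply/PU].
  exact: submx_trans vU UL.
exact: submx_trans vS SU.
Qed.

Lemma simple_subquo_exists L X : mxstable L -> mxstable X -> (L <= X)%MS -> ~~ (X <= L)%MS ->
  exists2 S, simple_subquo L S & (S <= X)%MS.
Proof.
move=> sL sX LX nXL.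
pose Q n := exists S, [/\ mxstable S, (L <= S)%MS, (S <= X)%MS, ~~ (S <= L)%MS & \rank S = n].
have [_ [S [sS LS SX nSL <-]] Smin] : exists2 n, Q n & forall n', Q n' -> (n <= n')%N.
  by apply: ex_minn_prop; exists (\rank X), X.
exists S => //; split=> // U sU LU US; have [UL|nUL] := boolP (U <= L)%MS; [by left | right].
have /Smin : Q (\rank U) by exists U; split=> //; apply: submx_trans US SX.
by rewrite -(geq_leqif (mxrank_leqif_sup US)).
Qed.

Definition subquo_ann L S : set G := [set x | (S *m rho x <= L)%MS].

Lemma subquo_ann_ideal L S : mxstable L -> mxstable S -> two_sided_ideal (subquo_ann L S).
Proof.
rewrite /subquo_ann => sL sS; split=> /=; first by rewrite raddf0 mulmx0 sub0mx.
split=> [x y Sx Sy|]; first by rewrite raddfD mulmxDr addmx_sub.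
split=> [x Sx|]; first by rewrite raddfN mulmxN eqmx_opp.
split=> g x Sx; rewrite mxrepM mulmxA.
  exact: submx_trans (submxMr _ Sx) (sL g).
exact: submx_trans (submxMr _ (sS g)) Sx.
Qed.

Lemma ideal_mul_act (I J : set G) v S L :
  (forall y, J y -> (v *m rho y <= S)%MS) -> (forall x, I x -> (S *m rho x <= L)%MS) ->
  forall z, ideal_mul I J z -> (v *m rho z <= L)%MS.
Proof.
move=> vJ SI _ [n [x [y [IJ ->]]]]; rewrite raddf_sum mulmx_sumr; apply: summx_sub => i _ /=.
by have [Ix Jy] := IJ i; rewrite mxrepM mulmxA; apply: submx_trans (submxMr _ (vJ _ Jy)) (SI _ Ix).
Qed.

(* An ideal [K] not annihilating the simple subquotient [S/L] contains an element acting as the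
   identity modulo [L] on any finitely many vectors of [S]; applied to the rows of [S], this
   shows that [K] contains [1] modulo the annihilator, whence maximality. *)
Section SimpleAnnihilator.
Variables (L S : 'M[k]_d) (K : set G).
Hypotheses (LS : simple_subquo L S) (tK : two_sided_ideal K).
Hypothesis nK_ann : ~ (K `<=` subquo_ann L S)%classic.

Lemma subquo_ideal_faithful v :
  (v <= S)%MS -> (forall y, K y -> (v *m rho y <= L)%MS) -> (v <= L)%MS.
Proof.
have [sL sS LS' _ _] := LS.
pose P v := (v <= S)%MS /\ forall y, K y -> (v *m rho y <= L)%MS.
have sP : subspace P.
  split; first by split=> [|y _]; rewrite ?mul0mx sub0mx.
    by move=> u w [uS uK] [wS wK]; split=> [|y Ky]; rewrite ?mulmxDl addmx_sub ?uK ?wK.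
  by move=> c u [uS uK]; split=> [|y Ky]; rewrite ?scalemx_sub // -scalemxAl scalemx_sub ?uK.
have Pact u x : P u -> P (u *m rho x).
  move=> [uS uK]; split=> [|y Ky]; first exact: mxstable_act.
  by rewrite -mulmxA -mxrepM; apply: uK; apply: idealMr.
have LP u : (u <= L)%MS -> P u.
  by move=> uL; split=> [|y _]; [exact: submx_trans uL LS' | exact: mxstable_act].
have [PL|SP] := simple_subquoP LS sP Pact LP (fun u => @proj1 _ _).
  by move=> vS vK; apply: PL.
case: nK_ann => y Ky; apply/row_subP => i; rewrite row_mul.
by apply: (SP _ (row_sub i S)).2.
Qed.

Lemma subquo_ideal_unit_vec t : (t <= S)%MS -> exists2 mu, K mu & (t - t *m rho mu <= L)%MS.
Proof.
move=> tS; have [sL sS LS' _ _] := LS.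
pose P v := (v <= S)%MS /\ exists2 y, K y & (v - t *m rho y <= L)%MS.
have LP v : (v <= L)%MS -> P v.
  move=> vL; split; first exact: submx_trans vL LS'.
  exists 0; [exact: ideal0 | by rewrite raddf0 mulmx0 subr0].
have sP : subspace P.
  split; first by apply: LP; apply: sub0mx.
    move=> u w [uS [y Ky uy]] [wS [z Kz wz]]; split; first exact: addmx_sub.
    exists (y + z); first exact: idealD.
    by rewrite raddfD mulmxDr opprD addrACA addmx_sub.
  move=> c u [uS [y Ky uy]]; split; first exact: scalemx_sub.
  exists (c *: y); first exact: idealZ.
  by rewrite linearZ -scalemxAr -scalerBr scalemx_sub.
have Pact u x : P u -> P (u *m rho x).
  move=> [uS [y Ky uy]]; split; first exact: mxstable_act.
  exists (x * y); first exact: idealMl.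
  by rewrite mxrepM mulmxA -mulmxBl mxstable_act.
have [PL|SP] := simple_subquoP LS sP Pact LP (fun u => @proj1 _ _).
  exists 0; first exact: ideal0.
  rewrite raddf0 mulmx0 subr0; apply: subquo_ideal_faithful => // y Ky.
  by apply: PL; split; [exact: mxstable_act | exists y; rewrite // subrr sub0mx].
by have [_ [mu Kmu tmu]] := SP t tS; exists mu.
Qed.

Lemma subquo_ideal_unit (vs : seq 'rV[k]_d) : all (fun v => v <= S)%MS vs ->
  exists2 kap, K kap & forall v, v \in vs -> (v - v *m rho kap <= L)%MS.
Proof.
have [sL sS LS' _ _] := LS.
elim: vs => [_|t vs IHvs /andP [tS /IHvs [kap Kkap vs_kap]]].
  by exists 0 => //; apply: ideal0.
have t'S : (t - t *m rho kap <= S)%MS by rewrite addmx_sub ?eqmx_opp ?mxstable_act.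
have [mu Kmu t'mu] := subquo_ideal_unit_vec t'S.
exists (kap + mu - mu * kap).
  exact: idealB tK (idealD tK Kkap Kmu) (idealMl _ tK Kkap).
move=> v; rewrite in_cons mxrep_sub_compose => /orP [/eqP -> // | /vs_kap vL].
by rewrite addmx_sub ?eqmx_opp ?mxstable_act.
Qed.

End SimpleAnnihilator.

Lemma subquo_ann_maximal L S : simple_subquo L S -> maximal_ideal (subquo_ann L S).
Proof.
move=> LS; have [sL sS _ nSL _] := LS; have tA := subquo_ann_ideal sL sS.
split=> //; split=> [annT|K tK annK].
  have : subquo_ann L S 1 by rewrite annT.
  by rewrite /subquo_ann /= mxrep1 mulmx1 => SL; rewrite SL in nSL.
have [Kann|nKann] := pselect (K `<=` subquo_ann L S)%classic.
  by left; apply/seteqP.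
right; apply: ideal1 => //.
have [|kap Kkap kap_unit] := subquo_ideal_unit LS tK nKann (vs := [seq row i S | i <- enum 'I_d]).
  by apply/allP => _ /mapP [i _ ->]; apply: row_sub.
suff /annK K1kap : subquo_ann L S (1 - kap) by rewrite -(subrK kap 1); apply: idealD.
rewrite /subquo_ann /= raddfB /= mxrep1 mulmxBr mulmx1; apply/row_subP => i.
by rewrite linearB /= row_mul; apply/kap_unit/map_f; rewrite mem_enum.
Qed.

Lemma fin_codim_ker (I : set G) : (forall x, rho x = 0 -> I x) -> fin_codim I.
Proof.
move=> kerI.
pose P (v : 'rV[k]_(d * d)) := exists x, v = mxvec (rho x).
have [|U PU] := subspace_submx (P := P).
  split; first by exists 0; rewrite raddf0 linear0.
    by move=> _ _ [x ->] [y ->]; exists (x + y); rewrite raddfD linearD.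
  by move=> c _ [x ->]; exists (c *: x); rewrite linearZ [in RHS]linearZ.
have /(_ _) /cid -/all_sig [e rowU_e] i : exists x, row i U = mxvec (rho x).
  by apply/PU/row_sub.
exists (d * d)%N, e => x; have /submxP [w rho_x] : (mxvec (rho x) <= U)%MS by apply/PU; exists x.
exists (fun i => w 0 i); apply/kerI/(can_inj mxvecK).
rewrite raddfB raddf_sum linear0 /= linearB linear_sum /= rho_x mulmx_sum_row.
by apply/eqP; rewrite subr_eq0; apply/eqP/eq_bigr => i _; rewrite rowU_e linearZ /= linearZ.
Qed.

Lemma subquo_ann_cfs L S : simple_subquo L S -> cfs (subquo_ann L S).
Proof.
move=> LS; split; first exact: subquo_ann_maximal.
by apply: fin_codim_ker => x rho_x; rewrite /subquo_ann /= rho_x mulmx0 sub0mx.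
Qed.

Lemma simple_subquo_shift L S T : simple_subquo L S -> mxstable T -> (L <= T)%MS ->
  (S :&: T <= L)%MS -> simple_subquo T (S + T)%MS.
Proof.
move=> [sL sS LS nSL Smin] sT LT ST_L; split=> //; [exact: mxstable_adds | exact: addsmxSr | |].
  apply: contraNN _ nSL => STT; apply: submx_trans _ ST_L.
  by rewrite sub_capmx submx_refl (submx_trans (addsmxSl _ _) STT).
move=> U sU TU US; have LUS : (L <= U :&: S)%MS by rewrite sub_capmx LS (submx_trans LT TU).
have [USL|SUS] := Smin _ (mxstable_cap sU sS) LUS (capmxSr _ _); last first.
  by right; rewrite addsmx_sub TU andbT (submx_trans SUS (capmxSl _ _)).
left; apply/rV_subP => u uU; have /sub_addsmxP [w u_w] := submx_trans uU US.
have wTT : (w.2 *m T <= T)%MS by apply: submxMl.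
have wSUS : (w.1 *m S <= U :&: S)%MS.
  rewrite sub_capmx submxMl andbT; have -> : w.1 *m S = u - w.2 *m T by rewrite u_w addrK.
  by rewrite addmx_sub // eqmx_opp (submx_trans wTT TU).
by rewrite u_w addmx_sub // (submx_trans (submx_trans wSUS USL) LT).
Qed.

Lemma subquo_ann_shift L S T : mxstable S -> mxstable T -> (L <= T)%MS ->
  (S :&: T <= L)%MS -> subquo_ann T (S + T)%MS = subquo_ann L S.
Proof.
move=> sS sT LT ST_L; apply/seteqP; split=> x; rewrite /subquo_ann /= addsmxMr addsmx_sub.
  move=> /andP [SxT _]; apply: submx_trans ST_L.
  by rewrite sub_capmx SxT sS.
by move=> SxL; rewrite sT (submx_trans SxL LT).
Qed.

End StableSubspaces.

(* [X/L] is modelled on the complement [X :\: L] of [L] in [X]: [quo_coord] reads a vector of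
   [X] modulo [L] in the row basis of that complement, and [quo_lift] maps coordinates back. *)
Section SubquotientCoordinates.
Variables (k : fieldType) (d : nat) (L X : 'M[k]_d).

Definition quo_dim := \rank (X :\: L)%MS.
Definition quo_base : 'M[k]_(quo_dim, d) := row_base (X :\: L)%MS.
Definition quo_coord (w : 'rV[k]_d) : 'rV[k]_quo_dim :=
  w *m (proj_mx (X :\: L)%MS L *m pinvmx quo_base).
Definition quo_lift (c : 'rV[k]_quo_dim) : 'rV[k]_d := c *m quo_base.

Lemma quo_coord_linear : linear quo_coord.
Proof. by move=> a u v; rewrite /quo_coord mulmxDl scalemxAl. Qed.

Lemma quo_lift_linear : linear quo_lift.
Proof. by move=> a u v; rewrite /quo_lift mulmxDl scalemxAl. Qed.

End SubquotientCoordinates.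

Arguments quo_lift {k d} L X c.

HB.instance Definition _ (k : fieldType) d (L X : 'M[k]_d) :=
  GRing.isLinear.Build k _ _ _ (quo_coord L X) (@quo_coord_linear k d L X).
HB.instance Definition _ (k : fieldType) d (L X : 'M[k]_d) :=
  GRing.isLinear.Build k _ _ _ (quo_lift L X) (@quo_lift_linear k d L X).

Section SubquotientCoordinateTheory.
Variables (k : fieldType) (d : nat) (L X : 'M[k]_d).
Implicit Types (w : 'rV[k]_d) (c : 'rV[k]_(quo_dim L X)).

Lemma quo_lift_sub c : (quo_lift L X c <= X)%MS.
Proof. by rewrite (submx_trans (submxMl _ _)) // eq_row_base diffmxSl. Qed.

Lemma quo_liftK : cancel (quo_lift L X) (quo_coord L X).
Proof.
move=> c; rewrite /quo_coord /quo_lift mulmxA proj_mx_id ?capmx_diff //.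
  by rewrite mulmxKp // row_base_free.
by rewrite (submx_trans (submxMl _ _)) // eq_row_base.
Qed.

Lemma quo_coordK w : (w <= X)%MS -> (quo_lift L X (quo_coord L X w) - w <= L)%MS.
Proof.
move=> wX; rewrite /quo_coord /quo_lift mulmxA mulmxKpV; last first.
  by rewrite eq_row_base proj_mx_sub.
rewrite -opprB eqmx_opp proj_mx_compl_sub // (submx_trans wX) //.
by rewrite -{1}(addsmx_diff_cap_eq X L) addsmxS ?capmxSr.
Qed.

Lemma quo_coord_eq0 w : (w <= L)%MS -> quo_coord L X w = 0.
Proof. by move=> wL; rewrite /quo_coord mulmxA proj_mx_0 ?capmx_diff ?mul0mx. Qed.

Lemma quo_coord_eq w w' : (w - w' <= L)%MS -> quo_coord L X w = quo_coord L X w'.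
Proof. by move=> ww'L; apply/eqP; rewrite -subr_eq0 -raddfB /= quo_coord_eq0. Qed.

Lemma quo_coord_eq0P w : (w <= X)%MS -> quo_coord L X w = 0 -> (w <= L)%MS.
Proof. by move=> wX w0; have := quo_coordK wX; rewrite w0 raddf0 sub0r eqmx_opp. Qed.

End SubquotientCoordinateTheory.

Section SubquotientModule.
Variables (k : fieldType) (G : algType k) (d : nat) (rho : mxrep G d) (L X : 'M[k]_d).
Hypotheses (sL : mxstable rho L) (sX : mxstable rho X).

Definition subquo_act x c := quo_coord L X (quo_lift L X c *m rho x).

Lemma quo_coord_act w x : (w <= X)%MS ->
  quo_coord L X (quo_lift L X (quo_coord L X w) *m rho x) = quo_coord L X (w *m rho x).
Proof.
by move=> wX; apply: quo_coord_eq; rewrite -mulmxBl mxstable_act // quo_coordK.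
Qed.

Lemma subquo_act_lift w c x : (w - quo_lift L X c <= L)%MS ->
  (w *m rho x - quo_lift L X (subquo_act x c) <= L)%MS.
Proof.
move=> wc; rewrite -(subrK (quo_lift L X c *m rho x) (w *m rho x)) -mulmxBl -addrA.
apply: addmx_sub; first exact: mxstable_act.
by rewrite -opprB eqmx_opp; apply: quo_coordK; apply: mxstable_act (quo_lift_sub _).
Qed.

Fact subquo_act_addl x y c : subquo_act (x + y) c = subquo_act x c + subquo_act y c.
Proof. by rewrite /subquo_act raddfD /= mulmxDr raddfD. Qed.
Fact subquo_act_addr x c c' : subquo_act x (c + c') = subquo_act x c + subquo_act x c'.
Proof. by rewrite /subquo_act !raddfD /= mulmxDl raddfD. Qed.
Fact subquo_act_scalel (a : k) x c : subquo_act (a *: x) c = a *: subquo_act x c.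
Proof. by rewrite /subquo_act linearZ /= -scalemxAr linearZ. Qed.
Fact subquo_act_scaler (a : k) x c : subquo_act x (a *: c) = a *: subquo_act x c.
Proof. by rewrite /subquo_act !linearZ /= -scalemxAl linearZ. Qed.
Fact subquo_act1 c : subquo_act 1 c = c.
Proof. by rewrite /subquo_act mxrep1 mulmx1 quo_liftK. Qed.
Fact subquo_actM x y c : subquo_act (x * y) c = subquo_act x (subquo_act y c).
Proof.
by rewrite /subquo_act mxrepM mulmxA quo_coord_act // mxstable_act ?quo_lift_sub.
Qed.

Definition subquo_gmod : gmod G :=
  GMod subquo_act_addl subquo_act_addr subquo_act_scalel subquo_act_scaler
    subquo_act1 subquo_actM.

Lemma subquo_is_S : simple_subquo rho L X -> is_S (subquo_ann rho L X) subquo_gmod.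
Proof.
move=> LX; have [_ _ LX' nXL _] := LX; split=> [|x c annx]; last first.
  by apply: quo_coord_eq0; apply: submx_trans (submxMr _ (quo_lift_sub _)) annx.
split=> [|N [N0 [ND [NZ Nact]]]].
  have /row_subPn [i /negP nXiL] := nXL; exists (quo_coord L X (row i X)).
  by move/(quo_coord_eq0P (row_sub i X)).
pose P w := (w <= X)%MS /\ exists2 c, N c & (w - quo_lift L X c <= L)%MS.
have LP w : (w <= L)%MS -> P w.
  by move=> wL; split; [exact: submx_trans wL LX' | exists 0; rewrite // raddf0 subr0].
have sP : subspace P.
  split; first by apply/LP/sub0mx.
    move=> u w [uX [c Nc uc]] [wX [c' Nc' wc']]; split; first exact: addmx_sub.
    by exists (c + c'); [exact: ND | rewrite raddfD opprD addrACA addmx_sub].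
  move=> a w [wX [c Nc wc]]; split; first exact: scalemx_sub.
  by exists (a *: c); [exact: NZ | rewrite linearZ -scalerBr scalemx_sub].
have Pact w x : P w -> P (w *m rho x).
  move=> [wX [c Nc wc]]; split; first exact: mxstable_act.
  by exists (subquo_act x c); [exact: Nact | exact: subquo_act_lift].
have [PL|XP] := simple_subquoP LX sP Pact LP (fun w => @proj1 _ _).
  left; apply/seteqP; split=> [c Nc|_ ->] //=; rewrite -(quo_liftK c) quo_coord_eq0 //.
  by apply: PL; split; [exact: quo_lift_sub | exists c; rewrite // subrr sub0mx].
right; apply/seteqP; split=> // c _; have [_ [c' Nc' cc']] := XP _ (quo_lift_sub c).
by move/(quo_coord_eq X): cc'; rewrite !quo_liftK => ->.
Qed.

End SubquotientModule.

(* [Y/L] is a complement of [S/L] in [T/L]. *)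
Definition subquo_compl (k : fieldType) (G : algType k) d (rho : mxrep G d) (L S T Y : 'M[k]_d) :=
  [/\ mxstable rho Y, (L <= Y)%MS, (Y <= T)%MS, (S :&: Y <= L)%MS & (T <= S + Y)%MS].

Section SubquotientExtension.
Variables (k : fieldType) (G : algType k) (d : nat) (rho : mxrep G d) (L S T : 'M[k]_d).
Hypotheses (sL : mxstable rho L) (sS : mxstable rho S) (sT : mxstable rho T).
Hypotheses (LS : (L <= S)%MS) (ST : (S <= T)%MS).

Local Notation S_L := (subquo_gmod sL sS).
Local Notation T_L := (subquo_gmod sL sT).
Local Notation T_S := (subquo_gmod sS sT).

Definition subquo_incl (c : S_L) : T_L := quo_coord L T (quo_lift L S c).
Definition subquo_proj (e : T_L) : T_S := quo_coord S T (quo_lift L T e).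

Lemma quo_lift_subT (c : S_L) : (quo_lift L S c <= T)%MS.
Proof. exact: submx_trans (quo_lift_sub _) ST. Qed.

Lemma quo_coordK_S w : (w <= T)%MS -> (quo_lift L T (quo_coord L T w) - w <= S)%MS.
Proof. by move=> wT; apply: submx_trans (quo_coordK _ wT) LS. Qed.

Lemma subquo_incl_hom : ghom subquo_incl.
Proof.
split=> [u v|]; first by rewrite /subquo_incl !raddfD.
split=> [a v|x v]; first by rewrite /subquo_incl !linearZ.
rewrite /subquo_incl /= /subquo_act quo_coord_act ?quo_lift_subT //.
by apply: quo_coord_eq; apply/quo_coordK/mxstable_act/quo_lift_sub.
Qed.

Lemma subquo_proj_hom : ghom subquo_proj.
Proof.
split=> [u v|]; first by rewrite /subquo_proj !raddfD.
split=> [a v|x v]; first by rewrite /subquo_proj !linearZ.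
rewrite /subquo_proj /= /subquo_act quo_coord_act ?quo_lift_sub //.
by apply: quo_coord_eq; apply/quo_coordK_S/mxstable_act/quo_lift_sub.
Qed.

Lemma subquo_incl_inj : injective subquo_incl.
Proof.
move=> c c' /eqP; rewrite -subr_eq0 -raddfB /= => /eqP c_c'.
apply/eqP; rewrite -subr_eq0 -(quo_liftK (c - c')) quo_coord_eq0 //.
rewrite raddfB /=; apply: quo_coord_eq0P _ c_c'.
by rewrite addmx_sub ?eqmx_opp ?quo_lift_subT.
Qed.

Lemma subquo_proj_surj (e : T_S) : exists c, subquo_proj c = e.
Proof.
exists (quo_coord L T (quo_lift S T e)); rewrite /subquo_proj -[RHS]quo_liftK.
by apply: quo_coord_eq; apply/quo_coordK_S/quo_lift_sub.
Qed.

Lemma subquo_exact (e : T_L) : subquo_proj e = 0 <-> exists c, subquo_incl c = e.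
Proof.
split=> [/(quo_coord_eq0P (quo_lift_sub _)) eS|[c <-]].
  exists (quo_coord L S (quo_lift L T e)); rewrite /subquo_incl -[RHS]quo_liftK.
  by apply: quo_coord_eq; apply: quo_coordK.
rewrite /subquo_proj (quo_coord_eq _ (quo_coordK_S (quo_lift_subT c))).
by rewrite quo_coord_eq0 ?quo_lift_sub.
Qed.

Lemma subquo_section_compl (sec : T_S -> T_L) :
  ghom sec -> (forall e, subquo_proj (sec e) = e) -> exists Y, subquo_compl rho L S T Y.
Proof.
move=> [secD [secZ secA]] secK; have sec0 : sec 0 = 0 by rewrite -(scale0r 0) secZ scale0r.
pose P w := (w <= T)%MS /\ exists e, (w - quo_lift L T (sec e) <= L)%MS.
have LP w : (w <= L)%MS -> P w.
  move=> wL; split; first exact: submx_trans wL (submx_trans LS ST).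
  by exists 0; rewrite sec0 raddf0 subr0.
have sP : subspace P.
  split; first by apply/LP/sub0mx.
    move=> u w [uT [a ua]] [wT [b wb]]; split; first exact: addmx_sub.
    by exists (a + b); rewrite secD raddfD opprD addrACA addmx_sub.
  move=> c w [wT [a wa]]; split; first exact: scalemx_sub.
  by exists (c *: a); rewrite secZ linearZ -scalerBr scalemx_sub.
have Pact w x : P w -> P (w *m rho x).
  move=> [wT [a wa]]; split; first exact: mxstable_act.
  by exists (gact x a); rewrite secA; apply: subquo_act_lift.
have [Y sY PY] := subspace_mxstable sP Pact.
exists Y; split=> //.
- by apply/rV_subP => w /LP /PY.
- by apply/rV_subP => w /PY [].
- apply/rV_subP => w; rewrite sub_capmx => /andP [wS /PY [wT [a wa]]].
  suff a0 : a = 0 by move: wa; rewrite a0 sec0 raddf0 subr0.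
  rewrite -[a]secK /subquo_proj -(quo_coord_eq0 T wS); apply/esym/quo_coord_eq.
  exact: submx_trans wa LS.
- apply/rV_subP => w wT; set a := quo_coord S T w.
  have aY : (quo_lift L T (sec a) <= Y)%MS.
    by apply/PY; split; [exact: quo_lift_sub | exists a; rewrite subrr sub0mx].
  rewrite -(subrK (quo_lift L T (sec a)) w) addmx_sub_adds //.
  apply: (@quo_coord_eq0P _ _ S T); first by rewrite addmx_sub ?eqmx_opp ?quo_lift_sub.
  by rewrite raddfB /= -[quo_coord S T (quo_lift L T _)]/(subquo_proj _) secK subrr.
Qed.

Lemma subquo_ext1_nonzero : ~ (exists Y, subquo_compl rho L S T Y) -> Ext1_nonzero T_S S_L.
Proof.
move=> noY; exists T_L, subquo_incl, subquo_proj.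
split; first exact: subquo_incl_hom.
split; first exact: subquo_proj_hom.
split; first exact: subquo_incl_inj.
split; first exact: subquo_proj_surj.
split; first exact: subquo_exact.
by move=> [sec [hsec secK]]; apply: noY; apply: subquo_section_compl secK.
Qed.

End SubquotientExtension.

Section BlockDecomposition.
Variables (k : fieldType) (G : algType k) (d : nat) (rho : mxrep G d).
Implicit Types (L S T X Y Z : 'M[k]_d) (u v w : 'rV[k]_d) (B : set (set G)) (s : seq (set G)).

Definition killed_by s L m (U : 'M[k]_(m, d)) :=
  forall x, ideal_prod s x -> (U *m rho x <= L)%MS.

Definition in_block L B u := exists2 s, all_in B s & killed_by s L u.

Lemma killed_by_rows s L m (U : 'M[k]_(m, d)) :
  (forall i, killed_by s L (row i U)) -> killed_by s L U.
Proof. by move=> kU x sx; apply/row_subP => i; rewrite row_mul; apply: kU. Qed.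

Lemma ext_class_ann B s S T : ext_class B -> all_in B s -> simple_subquo rho S T ->
  killed_by s S T -> B (subquo_ann rho S T).
Proof.
move=> cB sB ST kT; have [mA _] := subquo_ann_cfs ST.
have [J sJ J_ann] := maximal_ideal_prod_sub mA (ext_class_ideals cB sB) kT.
have BJ := sJ B sB.
by rewrite -(maximal_ideal_sub_eq (ext_class_cfs cB BJ).1 mA J_ann).
Qed.

Lemma subquo_ext_rel L S T : simple_subquo rho L S -> simple_subquo rho S T ->
  ~ (exists Y, subquo_compl rho L S T Y) -> ext_rel (subquo_ann rho S T) (subquo_ann rho L S).
Proof.
move=> LS ST noY; have [sL sS LS' _ _] := LS; have [_ sT ST' _ _] := ST.
split; first exact: subquo_ann_cfs ST.
split; first exact: subquo_ann_cfs LS.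
exists (subquo_gmod sS sT), (subquo_gmod sL sS).
by split; [|split]; [exact: subquo_is_S | exact: subquo_is_S | exact: subquo_ext1_nonzero].
Qed.

Lemma subquo_compl_shift L S T X Z : (L <= T)%MS -> (S :&: T <= L)%MS ->
  subquo_compl rho T (S + T)%MS X Z -> subquo_compl rho L S X Z.
Proof.
move=> LT ST_L [sZ TZ ZX STZ_T XSTZ]; split=> //; first exact: submx_trans LT TZ.
  apply: submx_trans ST_L; rewrite sub_capmx capmxSl /=.
  by apply: submx_trans STZ_T; rewrite capmxS ?addsmxSl.
by apply: submx_trans XSTZ _; rewrite -addsmxA addsmxS // addsmx_sub TZ submx_refl.
Qed.

(* Induction on [X/S]: the annihilator of a simple [T/S] at the bottom of [X/S] lies in [B];
   were [T/L] a non-split extension of [T/S] by [S/L], the annihilator of [S/L] would too. *)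
Lemma simple_subquo_compl L S X B s : simple_subquo rho L S -> mxstable rho X -> (S <= X)%MS ->
  ext_class B -> all_in B s -> killed_by s S X -> ~ B (subquo_ann rho L S) ->
  exists Y, subquo_compl rho L S X Y.
Proof.
move=> + sX + cB sB; have [n] := ubnP (\rank X - \rank S).
elim: n => [|n IHn] in L S *; first by rewrite ltn0.
move=> lt_n LS SX kX nB; have [sL sS LS' _ _] := LS.
have [XS|nXS] := boolP (X <= S)%MS.
  exists L; split; rewrite ?capmxSr //; first exact: submx_trans LS' SX.
  exact: submx_trans XS (addsmxSl _ _).
have [T ST TX] := simple_subquo_exists sS sX SX nXS; have [_ _ ST' nTS _] := ST.
have BT : B (subquo_ann rho S T).
  by apply: ext_class_ann cB sB ST _ => x /kX; apply: submx_trans; apply: submxMr.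
have [[T' [sT' LT' T'T ST'_L TST']]|noY] := pselect (exists Y, subquo_compl rho L S T Y).
  have rankS : (\rank S < \rank (S + T')%MS)%N.
    by apply: leq_trans (mxrankS TST'); rewrite (ltn_leqif (mxrank_leqif_sup ST')).
  have STX : (S + T' <= X)%MS by rewrite addsmx_sub SX (submx_trans T'T TX).
  have lt' : (\rank X - \rank (S + T')%MS < n)%N by have := mxrankS STX; lia.
  have kX' : killed_by s (S + T')%MS X.
    by move=> x /kX XS; apply: submx_trans XS (addsmxSl _ _).
  have nB' : ~ B (subquo_ann rho T' (S + T')%MS) by rewrite (subquo_ann_shift sS sT' LT' ST'_L).
  have [Z T'Z] := IHn T' _ lt' (simple_subquo_shift LS sT' LT' ST'_L) STX kX' nB'.
  by exists Z; apply: subquo_compl_shift T'Z.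
case: nB; apply: ext_class_closed cB BT (subquo_ann_cfs LS) _.
exact/rst_step/subquo_ext_rel.
Qed.

Lemma block_lift L S X B s u : simple_subquo rho L S -> mxstable rho X -> (S <= X)%MS ->
  ext_class B -> all_in B s -> (u <= X)%MS -> killed_by s S u ->
  exists2 u', (u' <= X)%MS /\ in_block L B u' & (u - u' <= S)%MS.
Proof.
move=> LS sX SX cB sB uX ku; have [_ sS _ _ _] := LS.
have [Bm|nBm] := pselect (B (subquo_ann rho L S)).
  exists u; last by rewrite subrr sub0mx.
  by split=> //; exists (subquo_ann rho L S :: s) => //; apply: ideal_mul_act ku _.
have tS := ideal_prod_ideal (ext_class_ideals cB sB).
pose P w := (w <= X)%MS /\ killed_by s S w.
have sP : subspace P.
  split; first by split=> [|x _]; rewrite ?mul0mx sub0mx.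
    by move=> v w [vX kv] [wX kw]; split=> [|x sx]; rewrite ?mulmxDl addmx_sub ?kv ?kw.
  by move=> c w [wX kw]; split=> [|x sx]; rewrite ?scalemx_sub // -scalemxAl scalemx_sub ?kw.
have Pact w y : P w -> P (w *m rho y).
  move=> [wX kw]; split=> [|x sx]; first exact: mxstable_act.
  by rewrite -mulmxA -mxrepM; apply: kw; apply: idealMr.
have [Xu sXu PXu] := subspace_mxstable sP Pact.
have SXu : (S <= Xu)%MS.
  apply/rV_subP => w wS; apply/PXu.
  by split=> [|x _]; [exact: submx_trans wS SX | exact: mxstable_act].
have kXu : killed_by s S Xu.
  by apply: killed_by_rows => i; have [] := (PXu (row i Xu)).2 (row_sub i Xu).
have [Y [sY LY YXu SY_L XuSY]] := simple_subquo_compl LS sXu SXu cB sB kXu nBm.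
have /sub_addsmxP [w u_w] : (u <= S + Y)%MS by apply: submx_trans XuSY; apply/PXu.
have yY : (w.2 *m Y <= Y)%MS by apply: submxMl.
have [yX ky] := (PXu _).2 (submx_trans yY YXu).
exists (w.2 *m Y); last by rewrite u_w addrK submxMl.
split=> //; exists s => // x sx; apply: submx_trans SY_L.
by rewrite sub_capmx ky // mxstable_act.
Qed.

Definition block_vec L X (p : set (set G) * 'rV[k]_d) :=
  [/\ ext_class p.1, (p.2 <= X)%MS & in_block L p.1 p.2].

Lemma block_decomposition L X v : mxstable rho L -> mxstable rho X -> (L <= X)%MS ->
  (v <= X)%MS -> exists n (p : 'I_n -> set (set G) * 'rV[k]_d),
    (forall i, block_vec L X (p i)) /\ (v - \sum_i (p i).2 <= L)%MS.
Proof.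
move=> + sX + vX; have [n] := ubnP (\rank X - \rank L).
elim: n => [|n IHn] in L *; first by rewrite ltn0.
move=> lt_n sL LX; have [XL|nXL] := boolP (X <= L)%MS.
  exists 0%N, (fun=> (set0, 0)); split=> [[]//|].
  by rewrite big_ord0 subr0; apply: submx_trans vX XL.
have [S LS SX] := simple_subquo_exists sL sX LX nXL; have [_ sS LS' nSL _] := LS.
have [|m [p [p_blocks v_p]]] := IHn S _ sS SX.
  have := mxrankS SX; rewrite -(ltn_leqif (mxrank_leqif_sup LS')) in nSL; lia.
have /choice [u' u'P] i :
    exists u', [/\ (u' <= X)%MS, in_block L (p i).1 u' & ((p i).2 - u' <= S)%MS].
  have [cB uX [s sB ku]] := p_blocks i.
  by have [u'' [u''X u''B] u_u''] := block_lift LS sX SX cB sB uX ku; exists u''.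
set r := v - \sum_i u' i.
have rS : (r <= S)%MS.
  rewrite /r -(subrK (\sum_i (p i).2) v) -addrA -sumrB addmx_sub ?summx_sub // => i _.
  by case: (u'P i).
have [cA Am] := ext_class_ofP (subquo_ann_cfs LS).
exists (m + 1)%N.
exists (ord_cat (fun i => ((p i).1, u' i)) (fun=> (ext_class_of (subquo_ann rho L S), r))).
split; last by rewrite (big_ord_cat _ _ snd) big_ord1 /= /r subrKC subrr sub0mx.
apply: (ord_catP (P := block_vec L X)) => [i | _].
  by have [cB _ _] := p_blocks i; have [] := u'P i; split.
split=> //; first exact: submx_trans rS SX.
exists [:: subquo_ann rho L S]; first by split.
by apply: (ideal_mul_act (S := S)) => [y _|x Ax] //; apply: mxstable_act.
Qed.

End BlockDecomposition.

Section LeftIdeals.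
Variables (k : fieldType) (A : algType k).
Implicit Types (N : set A) (a x y : A).

Definition left_ideal N :=
  [/\ N 0, forall x y, N x -> N y -> N (x + y) & forall a x, N x -> N (a * x)].

Lemma left_ideal0 N : left_ideal N -> N 0.
Proof. by case. Qed.
Lemma left_idealD N x y : left_ideal N -> N x -> N y -> N (x + y).
Proof. by case=> _ ND _; apply: ND. Qed.
Lemma left_idealM N a x : left_ideal N -> N x -> N (a * x).
Proof. by case=> _ _ NM; apply: NM. Qed.
Lemma left_idealZ N (c : k) x : left_ideal N -> N x -> N (c *: x).
Proof. by move=> lN Nx; rewrite -[x]mul1r scalerAl; apply: left_idealM. Qed.
Lemma left_idealB N x y : left_ideal N -> N x -> N y -> N (x - y).
Proof. by move=> lN Nx Ny; apply: left_idealD => //; rewrite -scaleN1r; apply: left_idealZ. Qed.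
Lemma left_ideal_sum N (I : Type) (r : seq I) (P : pred I) (F : I -> A) :
  left_ideal N -> (forall i, P i -> N (F i)) -> N (\sum_(i <- r | P i) F i).
Proof.
by move=> lN NF; apply: (big_ind N) => //; [apply: left_ideal0 | move=> ? ?; apply: left_idealD].
Qed.
Lemma left_ideal_trans N x y z : left_ideal N -> N (x - y) -> N (y - z) -> N (x - z).
Proof. by move=> lN xy yz; rewrite -(subrKA y); apply: left_idealD. Qed.

End LeftIdeals.

Section Combinations.
Variables (k : fieldType) (A : lmodType k) (T : finType) (z : T -> A).

Definition comb (c : 'rV[k]_#|T|) : A := \sum_t c 0 (enum_rank t) *: z t.

Lemma comb_linear : linear comb.
Proof.
move=> a c c'; rewrite /comb scaler_sumr -big_split; apply: eq_bigr => t _.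
by rewrite !mxE scalerDl scalerA.
Qed.

End Combinations.

HB.instance Definition _ (k : fieldType) (A : lmodType k) (T : finType) (z : T -> A) :=
  GRing.isLinear.Build k _ _ _ (comb z) (comb_linear z).

Section RepresentationOfAction.
Variables (k : fieldType) (G A : algType k) (f : {lrmorphism G -> A}) (N : set A) (d : nat).
Variable vec : {linear 'rV[k]_d -> A}.
Hypotheses (lN : left_ideal N) (vec_inj : forall c, N (vec c) -> c = 0).
Hypothesis vec_act : forall g c, exists c', N (f g * vec c - vec c').

Definition represents g (R : 'M[k]_d) := forall c, N (f g * vec c - vec (c *m R)).

Lemma represents_unique g R R' : represents g R -> represents g R' -> R = R'.
Proof.
move=> gR gR'; apply/row_matrixP => i; rewrite !rowE; apply/eqP; rewrite -subr_eq0.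
apply/eqP/vec_inj; rewrite raddfB /=.
have := left_idealB lN (gR' (delta_mx 0 i)) (gR (delta_mx 0 i)).
by rewrite opprB addrC addrA subrK.
Qed.

Lemma represents_exists g : exists R, represents g R.
Proof.
have [act actP] := choice (vec_act g).
exists (\matrix_(i, j) act (delta_mx 0 i) 0 j) => c.
rewrite (row_sum_delta c) mulmx_suml !(linear_sum vec) mulr_sumr -sumrB.
apply: left_ideal_sum => // i _; rewrite -scalemxAl !linearZ /= -scalerAr -scalerDr.
apply: left_idealZ => //; rewrite -rowE.
suff -> : row i (\matrix_(i, j) act (delta_mx 0 i) 0 j) = act (delta_mx 0 i) by [].
by apply/rowP => j; rewrite !mxE.
Qed.

Lemma mxrep_of_action : exists rho : mxrep G d, forall g, represents g (rho g).
Proof.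
have [rho rhoP] := choice represents_exists.
have rho_lin : linear rho.
  move=> a x y; apply: represents_unique (rhoP _) _ => c.
  rewrite mulmxDr -scalemxAr 2!linearP /= mulrDl -scalerAl opprD addrACA -scalerBr.
  exact: left_idealD lN (left_idealZ _ lN (rhoP x c)) (rhoP y c).
have rho1 : rho 1 = 1%:M.
  apply: represents_unique (rhoP _) _ => c.
  by rewrite rmorph1 mul1r mulmx1 subrr; apply: left_ideal0.
have rhoM x y : rho (x * y) = rho y *m rho x.
  apply: represents_unique (rhoP _) _ => c; rewrite rmorphM -mulrA mulmxA.
  apply: left_ideal_trans (rhoP x _) => //.
  by rewrite -mulrBr; apply: left_idealM (rhoP y c).
by exists (MxRep rho_lin rho1 rhoM).
Qed.

End RepresentationOfAction.

Section FiniteQuotient.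
Variables (k : fieldType) (G A : algType k) (f : {lrmorphism G -> A}) (N : set A).
Variables (T : finType) (z : T -> A).
Hypotheses (lN : left_ideal N) (z_act : forall g t, exists c, N (f g * z t - comb z c)).

Lemma comb_act g c : exists c', N (f g * comb z c - comb z c').
Proof.
have [act actP] := choice (z_act g).
exists (\sum_t c 0 (enum_rank t) *: act t).
rewrite (linear_sum (comb z)) [comb z c]/comb mulr_sumr -sumrB; apply: left_ideal_sum => // t _.
by rewrite -scalerAr linearZ -scalerBr; apply: left_idealZ.
Qed.

Lemma finite_quotient_mxrep v : (exists c, N (v - comb z c)) ->
  exists d (rho : mxrep G d) (vec : {linear 'rV[k]_d -> A}),
    (forall g c, N (f g * vec c - vec (c *m rho g))) /\ exists c0, N (v - vec c0).
Proof.
move=> [cv Ncv]; have [|K NK] := subspace_submx (P := fun c => N (comb z c)).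
  split; first by rewrite raddf0; apply: left_ideal0.
    by move=> c c' Nc Nc'; rewrite raddfD; apply: left_idealD.
  by move=> a c Nc; rewrite linearZ; apply: left_idealZ.
pose vec := comb z \o quo_lift K 1%:M.
have comb_vec w : N (comb z w - vec (quo_coord K 1%:M w)).
  by rewrite -raddfB /=; apply/NK; rewrite -opprB eqmx_opp quo_coordK ?submx1.
have vec_inj c : N (vec c) -> c = 0.
  by move=> /NK cK; rewrite -(quo_liftK c) quo_coord_eq0.
have vec_act g c : exists c', N (f g * vec c - vec c').
  have [w Nw] := comb_act g (quo_lift K 1%:M c).
  by exists (quo_coord K 1%:M w); apply: left_ideal_trans Nw _.
have [rho rhoP] := mxrep_of_action lN vec_inj vec_act.
exists _, rho, vec; split=> [g c|]; first exact: rhoP.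
by exists (quo_coord K 1%:M cv); apply: left_ideal_trans Ncv _.
Qed.

End FiniteQuotient.

Section HarishChandraBlocks.
Variables (k : fieldType) (G A : algType k) (f : {lrmorphism G -> A}).

Lemma Aideal_left_ideal (m : set G) : left_ideal (Aideal f m).
Proof.
split; first by exists 0%N, (fun=> 0), (fun=> 0); rewrite big_ord0; split=> [[]|].
  move=> _ _ [n1 [a1 [x1 [m1 ->]]]] [n2 [a2 [x2 [m2 ->]]]].
  pose ax := ord_cat (fun i => (a1 i, x1 i)) (fun i => (a2 i, x2 i)).
  exists (n1 + n2)%N, (fun i => (ax i).1), (fun i => (ax i).2).
  rewrite /ax (big_ord_cat _ _ (fun p : A * G => p.1 * f p.2)); split=> //.
  exact: (ord_catP (P := fun p : A * G => m p.2)).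
move=> b _ [n [a [x [mx ->]]]]; exists n, (fun i => b * a i), x; split=> //.
by rewrite mulr_sumr; apply: eq_bigr => i _; rewrite mulrA.
Qed.

Lemma Aideal_mul (m : set G) a x : m x -> Aideal f m (a * f x).
Proof. by move=> mx; exists 1%N, (fun=> a), (fun=> x); rewrite big_ord1. Qed.

Lemma GaG_mul v y g h : GaG f v y -> GaG f v (f g * y * f h).
Proof.
move=> [n [g1 [h1 ->]]]; exists n, (fun i => g * g1 i), (fun i => h1 i * h).
by rewrite mulr_sumr mulr_suml; apply: eq_bigr => i _; rewrite !rmorphM !mulrA.
Qed.

Lemma GaG_self v : GaG f v v.
Proof. by exists 1%N, (fun=> 1), (fun=> 1); rewrite big_ord1 rmorph1 mulr1 mul1r. Qed.

(* [G v G] is spanned over [G] on the right by finitely many [e i], and [G] is spanned modulo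
   [m] by finitely many [b l]; so the [e i * f (b l)] span [G v G] modulo [A m]. *)
Lemma GaG_finite_span (m : set G) v : fin_codim m -> fg_right f (GaG f v) ->
  exists (T : finType) (z : T -> A), (forall t, GaG f v (z t)) /\
    forall y, GaG f v y -> exists c, Aideal f m (y - comb z c).
Proof.
move=> [r [b bP]] [n [e [eP e_span]]].
pose z (t : 'I_n * 'I_r) := e t.1 * f (b t.2).
exists ('I_n * 'I_r)%type, z; split=> [t|y /e_span [c ->]].
  by have := GaG_mul 1 (b t.2) (eP t.1); rewrite rmorph1 mul1r.
have [a aP] := choice (fun i => bP (c i)).
exists (\row_j a (enum_val j).1 (enum_val j).2).
have -> : comb z (\row_j a (enum_val j).1 (enum_val j).2) =
    \sum_i \sum_l a i l *: (e i * f (b l)).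
  by rewrite /comb pair_big /=; apply: eq_bigr => -[i l] _; rewrite mxE enum_rankK.
rewrite -sumrB; apply: left_ideal_sum (Aideal_left_ideal m) _ => i _.
have -> : \sum_l a i l *: (e i * f (b l)) = e i * f (\sum_l a i l *: b l).
  by rewrite linear_sum mulr_sumr; apply: eq_bigr => l _; rewrite linearZ /= scalerAr.
by rewrite -mulrBr -rmorphB; apply/Aideal_mul/aP.
Qed.

Lemma block_sum_exists B m v : quasinoetherian G -> quasicentral f -> ext_class B -> W B m ->
  exists n (Bs : 'I_n -> set (set G)) (vs : 'I_n -> A),
    (forall i, ext_class (Bs i) /\ quot_part f (Aideal f m) (Bs i) (vs i)) /\
    Aideal f m (v - \sum_(i < n) vs i).
Proof.
move=> qn qc cB Wm; have lN := Aideal_left_ideal m.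
have [T [z [zG z_span]]] := GaG_finite_span (qn B m cB Wm) (qc v).2.
have z_act g t : exists c, Aideal f m (f g * z t - comb z c).
  by apply: z_span; have := GaG_mul g 1 (zG t); rewrite rmorph1 mulr1.
have [d [rho [vec [vec_act [c0 v_c0]]]]] :=
  finite_quotient_mxrep lN z_act (z_span v (GaG_self v)).
have [n [p [p_blocks c0_p]]] :=
  block_decomposition (mxstable0 rho) (mxstable1 rho) (sub0mx _ _) (submx1 c0).
exists n, (fun i => (p i).1), (fun i => vec (p i).2); split=> [i|].
  have [cB' _ [s sB' ks]] := p_blocks i; split=> //.
  exists (ideal_prod s); split=> [|x sx]; first by exists s.
  by have := vec_act x (p i).2; rewrite (submx0null (ks x sx)) raddf0 subr0.
have -> : v - \sum_i vec (p i).2 = (v - vec c0) + vec (c0 - \sum_i (p i).2).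
  by rewrite (raddfB vec) addrA subrK (raddf_sum vec).
by rewrite (submx0null c0_p) raddf0 addr0.
Qed.

Lemma block_sum_direct (N : set A) : left_ideal N ->
  forall n (Bs : 'I_n -> set (set G)) (vs : 'I_n -> A),
  (forall i, ext_class (Bs i) /\ quot_part f N (Bs i) (vs i)) ->
  (forall i j, i != j -> Bs i <> Bs j) -> N (\sum_(i < n) vs i) -> forall i, N (vs i).
Proof.
move=> lN n Bs vs Bs_vs Bs_inj Nsum i0; have cB j : ext_class (Bs j) by case: (Bs_vs j).
have s_ex j : exists s, all_in (Bs j) s /\ forall x, ideal_prod s x -> N (f x * vs j).
  by have [_ [_ [[s [sB ->]] ks]]] := Bs_vs j; exists s.
have [s sP] := choice s_ex.
have ts j : two_sided_ideal (ideal_prod (s j)).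
  exact/ideal_prod_ideal/(ext_class_ideals (cB j) (sP j).1).
have [|q q0 qj] :=
    comax_unit (ts i0) (r := [seq j <- enum 'I_n | j != i0]) (J := fun j => ideal_prod (s j)).
  move=> j; rewrite mem_filter => /andP [ji0 _]; split=> //.
  by apply: ext_class_comax (cB i0) (cB j) _ (sP i0).1 (sP j).1; apply: Bs_inj; rewrite eq_sym.
have -> : vs i0 = f (1 - q) * vs i0 + f q * (\sum_j vs j) - \sum_(j | j != i0) f q * vs j.
  by rewrite (bigD1 i0) //= mulrDr mulr_sumr addrA addrK -mulrDl rmorphB rmorph1 subrK mul1r.
apply: (left_idealB lN (left_idealD lN ((sP i0).2 _ q0) (left_idealM (f q) lN Nsum))).
apply: left_ideal_sum lN _ => j ji0; apply: (sP j).2; apply: qj.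
by rewrite mem_filter ji0 mem_enum.
Qed.

End HarishChandraBlocks.

Theorem mainTheorem12 (k : fieldType) (G A : algType k)
  (f : {lrmorphism G -> A}) (f_inj : injective f) :
  quasinoetherian G -> quasicentral f -> HC_block_subalgebra f.
Proof.
move=> qn qc B m cB Wm; split=> [v|]; first exact: block_sum_exists qn qc cB Wm.
exact: block_sum_direct (Aideal_left_ideal f m).
Qed.
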